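(* Let $G$ be the two-dimensional $m\times n$ grid graph (the Cartesian product of a path on $m$ nodes and a path on $n$ nodes) with $m,n\ge 2$ and $mn>4$. Then $G$ does not have real sign rank $2$ (indeed there is no $\mathbf{Z}\in\mathbb{R}^{mn\times 2}$ with $\operatorname{sign}(A_{ij})=\operatorname{sign}((\mathbf{Z}\mathbf{Z}^\top)_{ij})$ for all $i\neq j$, where $\mathbf{A}$ is the adjacency matrix of $G$).
   Context: $\operatorname{sign}:\mathbb{R}\to\{+,-\}$ takes the value $-$ on $(-\infty,0]$ and $+$ on $(0,\infty)$. Diagonal entries of adjacency matrices are ignored. The real sign rank of a graph with adjacency $\mathbf{A}\in\{0,1\}^{N\times N}$ is the minimal $f$ such that there exists $\mathbf{Z}\in\mathbb{R}^{N\times f}$ with $\operatorname{sign}(A_{ij})=\operatorname{sign}((\mathbf{Z}\mathbf{Z}^\top)_{ij})$ for all $i\neq j$. *)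

From mathcomp Require Import all_boot all_order all_algebra.
From mathcomp Require Import reals.
Set Implicit Arguments. Unset Strict Implicit. Unset Printing Implicit Defensive.
Import Order.TTheory GRing.Theory Num.Theory.
Local Open Scope ring_scope.

(* sign : R -> {+,-}; encoded as bool, true = "+" (x > 0), false = "-" (x <= 0). *)
Definition sgnpos {R : realType} (x : R) : bool := 0 < x.

Definition grid_adj {m n : nat} (i j : 'I_(m * n)) : bool :=
  let a1 := (i %/ n)%N in let b1 := (i %% n)%N in
  let a2 := (j %/ n)%N in let b2 := (j %% n)%N in
  ((a1 == a2) && ((b1 == b2.+1) || (b2 == b1.+1))) ||
  ((b1 == b2) && ((a1 == a2.+1) || (a2 == a1.+1))).

Definition grid_adj_mx {R : realType} (m n : nat) : 'M[R]_(m * n) :=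
  \matrix_(i < m * n, j < m * n) (grid_adj i j : nat)%:R.

Definition sign_realizes {R : realType} (N f : nat) (A : 'M[R]_N) (Z : 'M[R]_(N, f)) : Prop :=
  forall i j : 'I_N, i != j -> sgnpos (A i j) = sgnpos ((Z *m Z^T) i j).

Definition has_real_sign_rank {R : realType} (N : nat) (A : 'M[R]_N) (f : nat) : Prop :=
  (exists Z : 'M[R]_(N, f), sign_realizes A Z) /\
  (forall g : nat, (g < f)%N -> ~ exists Z : 'M[R]_(N, g), sign_realizes A Z).

From mathcomp Require Import all_boot all_order all_algebra.
From mathcomp Require Import reals.
From mathcomp Require Import ring lra zify.
Set Implicit Arguments. Unset Strict Implicit. Unset Printing Implicit Defensive.
Import Order.TTheory GRing.Theory Num.Theory.
Local Open Scope ring_scope.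

(* The vertices k*n + l with k, l in {0, 1} span an induced 4-cycle of the grid.
   A sign realization in the plane would give vectors a, b, c, d with positive
   inner products along the cycle and nonpositive ones across its diagonals.
   By the Lagrange identity, consecutive cross products [a, b], [b, c], [c, d],
   [d, a] then all have the same sign, and expanding [a, c] through b and
   through d forces [a, c] to have that sign and its opposite. *)

Section PlaneFourCycle.
Variable R : realFieldType.
Implicit Types u v w a b c d : R * R.

Definition dot2 u v := u.1 * v.1 + u.2 * v.2.
Definition cross2 u v := u.1 * v.2 - u.2 * v.1.

Lemma dot2C u v : dot2 u v = dot2 v u.
Proof. by rewrite /dot2 mulrC [u.2 * _]mulrC. Qed.

Lemma dot2_ge0 u : 0 <= dot2 u u.
Proof. rewrite /dot2; nra. Qed.

Lemma cross2_mul u v w :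
  cross2 u v * cross2 v w = dot2 u v * dot2 v w - dot2 u w * dot2 v v.
Proof. rewrite /cross2 /dot2; ring. Qed.

Lemma cross2_expand u v w :
  cross2 u w * dot2 v v = cross2 u v * dot2 v w + dot2 u v * cross2 v w.
Proof. rewrite /cross2 /dot2; ring. Qed.

Lemma cross2_mul_gt0 u v w :
  0 < dot2 u v -> 0 < dot2 v w -> dot2 u w <= 0 ->
  0 < cross2 u v * cross2 v w.
Proof.
move=> uv vw uw; rewrite cross2_mul.
have := dot2_ge0 v; nra.
Qed.

Lemma mul_gt0_trans (x y z : R) : 0 < x * y -> 0 < y * z -> 0 < x * z.
Proof. by move=> xy yz; have := mulr_gt0 xy yz; nra. Qed.

Lemma no_plane_four_cycle a b c d :
  0 < dot2 a b -> 0 < dot2 b c -> 0 < dot2 c d -> 0 < dot2 d a ->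
  dot2 a c <= 0 -> dot2 b d <= 0 -> False.
Proof.
move=> ab bc cd da ac bd.
have xy := cross2_mul_gt0 ab bc ac.
have yz := cross2_mul_gt0 bc cd bd.
have zw := cross2_mul_gt0 cd da (ltac:(by rewrite dot2C) : dot2 c a <= 0).
have xz := mul_gt0_trans xy yz.
have xw := mul_gt0_trans xz zw.
have xx : 0 < cross2 a b * cross2 a b.
  rewrite -expr2 exprn_even_gt0 //.
  by apply: contraTneq xy => ->; rewrite mul0r ltxx.
set x := cross2 a b; set e := cross2 a c.
have via_d : - e * dot2 d d = cross2 c d * dot2 d a + dot2 c d * cross2 d a.
  by rewrite -cross2_expand /e /cross2; ring.
have pos_b : 0 < x * e * dot2 b b.
  rewrite -mulrA cross2_expand mulrDr mulrA mulrCA.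
  by apply: addr_gt0; apply: mulr_gt0.
have neg_d : x * e * dot2 d d < 0.
  rewrite -oppr_gt0 -mulNr -mulrN -mulrA via_d mulrDr mulrA mulrCA.
  by apply: addr_gt0; apply: mulr_gt0.
case: (lerP 0 (x * e)) => [xe | /ltW xe].
- by have := mulr_ge0 xe (dot2_ge0 d); lra.
- by have := mulr_le0_ge0 xe (dot2_ge0 b); lra.
Qed.

End PlaneFourCycle.

Lemma mulmx_tr_dim2 (R : realFieldType) (N : nat) (Z : 'M[R]_(N, 2)) (i j : 'I_N) :
  (Z *m Z^T) i j = dot2 (Z i 0, Z i 1) (Z j 0, Z j 1).
Proof.
rewrite !mxE !big_ord_recl big_ord0 addr0 !mxE.
by have -> : lift ord0 ord0 = 1 :> 'I_2 by apply: val_inj.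
Qed.

Lemma grid_adjE (m n : nat) (i j : 'I_(m * n)) (a1 b1 a2 b2 : nat) :
  (b1 < n)%N -> (b2 < n)%N -> val i = (a1 * n + b1)%N -> val j = (a2 * n + b2)%N ->
  grid_adj i j =
    ((a1 == a2) && ((b1 == b2.+1) || (b2 == b1.+1))) ||
    ((b1 == b2) && ((a1 == a2.+1) || (a2 == a1.+1))).
Proof.
move=> b1n b2n vi vj; rewrite /grid_adj.
by move: (edivn_eq a1 b1n) (edivn_eq a2 b2n); rewrite !edivn_def -vi -vj => -[-> ->] [-> ->].
Qed.

Lemma grid_vertex_neq (m n : nat) (i j : 'I_(m * n)) (a1 b1 a2 b2 : nat) :
  (b1 < n)%N -> (b2 < n)%N -> val i = (a1 * n + b1)%N -> val j = (a2 * n + b2)%N ->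
  (a1, b1) != (a2, b2) -> i != j.
Proof.
move=> b1n b2n vi vj; apply: contraNneq => ij.
by rewrite -(edivn_eq a1 b1n) -(edivn_eq a2 b2n) -vi -vj ij.
Qed.

Lemma grid_sign_realizationE (R : realType) (m n : nat) (Z : 'M[R]_(m * n, 2))
    (i j : 'I_(m * n)) (a1 b1 a2 b2 : nat) :
  sign_realizes (grid_adj_mx m n) Z ->
  (b1 < n)%N -> (b2 < n)%N -> val i = (a1 * n + b1)%N -> val j = (a2 * n + b2)%N ->
  (a1, b1) != (a2, b2) ->
  (0 < dot2 (Z i 0, Z i 1) (Z j 0, Z j 1)) =
    ((a1 == a2) && ((b1 == b2.+1) || (b2 == b1.+1))) ||
    ((b1 == b2) && ((a1 == a2.+1) || (a2 == a1.+1))).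
Proof.
move=> HZ b1n b2n vi vj neq.
have := HZ i j (grid_vertex_neq b1n b2n vi vj neq).
rewrite /sgnpos mulmx_tr_dim2 mxE (grid_adjE b1n b2n vi vj) => <-.
by case: (_ || _); rewrite ?ltr01 ?ltxx.
Qed.

Lemma no_grid_sign_realization_dim2 (R : realType) (m n : nat) :
  (2 <= m)%N -> (2 <= n)%N ->
  ~ exists Z : 'M[R]_(m * n, 2), sign_realizes (grid_adj_mx m n) Z.
Proof.
move=> m2 n2 [Z HZ].
have n0 : (0 < n)%N by apply: ltnW.
have lt00 : (0 * n + 0 < m * n)%N by nia.
have lt01 : (0 * n + 1 < m * n)%N by nia.
have lt11 : (1 * n + 1 < m * n)%N by nia.
have lt10 : (1 * n + 0 < m * n)%N by nia.
have E := grid_sign_realizationE HZ.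
apply: (@no_plane_four_cycle _
  (Z (Ordinal lt00) 0, Z (Ordinal lt00) 1) (Z (Ordinal lt01) 0, Z (Ordinal lt01) 1)
  (Z (Ordinal lt11) 0, Z (Ordinal lt11) 1) (Z (Ordinal lt10) 0, Z (Ordinal lt10) 1)).
- by rewrite (E _ _ 0 0 0 1).
- by rewrite (E _ _ 0 1 1 1).
- by rewrite (E _ _ 1 1 1 0).
- by rewrite (E _ _ 1 0 0 0).
- by rewrite leNgt (E _ _ 0 0 1 1).
- by rewrite leNgt (E _ _ 0 1 1 0).
Qed.

Theorem theorem2 (R : realType) (m n : nat) :
  (2 <= m)%N -> (2 <= n)%N -> (4 < m * n)%N ->
  ~ has_real_sign_rank (@grid_adj_mx R m n) 2 /\
  ~ (exists Z : 'M[R]_(m * n, 2), sign_realizes (@grid_adj_mx R m n) Z).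
Proof.
move=> m2 n2 _; have no_Z := @no_grid_sign_realization_dim2 R m n m2 n2.
by split => // -[].
Qed.
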